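(* Let $\Lambda=(\lambda_1,\lambda_2)\in(0,\infty)^2$, $\phi\in[0,1)$ and $0\le\theta<\theta'\le 1$. Let $(X_1,X_2)\sim\mathcal{BZIP}^+(\Lambda,\theta,\phi)$ and $(X_1',X_2')\sim\mathcal{BZIP}^+(\Lambda,\theta',\phi)$, with joint distribution functions $H^+_{\Lambda,\phi,\theta}$ and $H^+_{\Lambda,\phi,\theta'}$. Then $(X_1,X_2)\prec_{PQD}(X_1',X_2')$, i.e. $H^+_{\Lambda,\phi,\theta}(x_1,x_2)\le H^+_{\Lambda,\phi,\theta'}(x_1,x_2)$ for all $(x_1,x_2)\in\mathbb{R}^2$ (the two pairs having identical marginal distributions).
   Context: For $\mu>0$, $G_\mu$ denotes the distribution function of the Poisson distribution with mean $\mu$, and $G_\mu^{-1}(u)=\inf\{x\in\mathbb{N}:G_\mu(x)\ge u\}$ its quantile function (for $\mu=0$, $G_0^{-1}\equiv 0$). The model $\mathcal{BZIP}^{\pm}(\Lambda,\theta,\phi)$, with $\Lambda=(\lambda_1,\lambda_2)\in(0,\infty)^2$, $\theta\in[0,1]$, $\phi\in[0,1)$, is the law of $(X_1,X_2)=W\,(T_1,T_2)$, where: $W\sim$ Bernoulli$(1-\phi)$ (so $P(W=0)=\phi$); $T_j=Y_j+Z_j$ for $j=1,2$; $Y_1\sim\mathcal{P}((1-\theta)\lambda_1)$, $Y_2\sim\mathcal{P}((1-\theta)\lambda_2)$; $U\sim\mathcal U(0,1)$; in the positive-dependence model $\mathcal{BZIP}^+$, $(Z_1,Z_2)=(G^{-1}_{\theta\lambda_1}(U),G^{-1}_{\theta\lambda_2}(U))$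 (comonotonic shock), and in the negative-dependence model $\mathcal{BZIP}^-$, $(Z_1,Z_2)=(G^{-1}_{\theta\lambda_1}(U),G^{-1}_{\theta\lambda_2}(1-U))$ (counter-monotonic shock); $W$, $Y_1$, $Y_2$, $U$ are mutually independent. The law of $(T_1,T_2)$ is denoted $\mathcal{BP}^{\pm}(\Lambda,\theta)$. For random pairs with the same marginals, $(X_1,X_2)\prec_{PQD}(X_1',X_2')$ means $P(X_1\le x_1,X_2\le x_2)\le P(X_1'\le x_1,X_2'\le x_2)$ for all $x_1,x_2$. *)

From HB Require Import structures.
From mathcomp Require Import all_boot all_order all_algebra.
From mathcomp Require Import all_classical all_reals all_analysis.
Set Implicit Arguments. Unset Strict Implicit. Unset Printing Implicit Defensive.
Import Order.TTheory GRing.Theory Num.Theory.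
Local Open Scope classical_set_scope.
Local Open Scope ring_scope.

Section BZIP.
Context {R : realType}.

(* Poisson(mu) probability mass function, valid also for mu = 0
   (0 ^+ 0 = 1, so Poisson(0) is the Dirac mass at 0). *)
Definition ppmf (mu : R) (k : nat) : R := mu ^+ k / k`!%:R * expR (- mu).

Definition pcdfn (mu : R) (n : nat) : R := \sum_(k < n.+1) ppmf mu k.

Definition pcdf (mu : R) (x : R) : R :=
  if x < 0 then 0 else pcdfn mu (Num.truncn x).

(* Quantile G_mu^{-1}(u) = inf {n in N : G_mu(n) >= u}; G_0^{-1} = 0;
   when the set is empty (only u >= 1, a null event for U ~ U(0,1)) we put 0. *)
Definition pquant (mu : R) (u : R) : nat :=
  if mu == 0 then 0%N else
  match pselect (exists n : nat, u <= pcdfn mu n) with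
  | left h => ex_minn h
  | right _ => 0%N
  end.

(* Joint distribution function of (X1,X2) ~ BZIP^+(Lambda,theta,phi):
   X = W (Y1 + Z1, Y2 + Z2), W ~ Bernoulli(1-phi), Yj ~ P((1-theta) lambda_j),
   (Z1,Z2) = (G^{-1}_{theta l1}(U), G^{-1}_{theta l2}(U)), U ~ U(0,1),
   W, Y1, Y2, U independent.  Conditioning on W and U (independence) gives: *)
Definition Hplus (l1 l2 th ph : R) (x1 x2 : R) : \bar R :=
  (ph * ((0 <= x1) && (0 <= x2))%:R)%:E +
  (1 - ph)%:E *
    (\int[lebesgue_measure]_(u in `]0%R, 1%R[)
       (pcdf ((1 - th) * l1) (x1 - (pquant (th * l1) u)%:R) *
        pcdf ((1 - th) * l2) (x2 - (pquant (th * l2) u)%:R))%:E)%E.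

(* Marginal distribution functions P(X1 <= x) and P(X2 <= x). *)
Definition Hplus1 (l1 th ph : R) (x : R) : \bar R :=
  (ph * (0 <= x)%R%:R)%:E +
  (1 - ph)%:E *
    (\int[lebesgue_measure]_(u in `]0%R, 1%R[)
       (pcdf ((1 - th) * l1) (x - (pquant (th * l1) u)%:R))%:E)%E.

End BZIP.

From HB Require Import structures.
From mathcomp Require Import all_boot all_order all_algebra.
From mathcomp Require Import all_classical all_reals all_analysis.
From mathcomp Require Import measurable_realfun.
From mathcomp Require Import ring lra zify.
Set Implicit Arguments. Unset Strict Implicit. Unset Printing Implicit Defensive.
Import Order.TTheory GRing.Theory Num.Theory numFieldNormedType.Exports.
Local Open Scope classical_set_scope.
Local Open Scope ring_scope.

(* Conditioning on W and on the uniform U reduces everything to Poisson sums.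
   With G_b the Poisson(b) distribution function, u <= G_b(j) iff
   G_b^{-1}(u) <= j, so integrating over U in ]0, 1[ turns G_b^{-1}(U) into a
   Poisson(b) variable and the comonotone pair (G_b1^{-1}(U), G_b2^{-1}(U))
   into a pair with joint distribution function min(G_b1, G_b2).  Hence T_j,
   a sum of independent P((1 - theta) lambda_j) and P(theta lambda_j)
   variables, is P(lambda_j) whatever theta.  Going from theta to theta'
   moves the Poisson mass (theta' - theta) lambda_j of each independent part
   into the shock; the old shock plus this independent mass has marginals
   G_(theta' lambda_j), so by the Frechet bound its distribution function
   lies below min(G_(theta' lambda_1), G_(theta' lambda_2)), that of the new
   shock. *)

Lemma sum_triangle (V : nmodType) (F : nat -> nat -> V) n :
  \sum_(i < n.+1) \sum_(j < i.+1) F j (i - j)%N =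
  \sum_(j < n.+1) \sum_(k < (n - j).+1) F j k.
Proof.
elim: n => [|n IHn]; first by rewrite !big_ord1.
rewrite big_ord_recr /= IHn [RHS]big_ord_recr /= subnn [in RHS]big_ord1.
rewrite [X in _ + X]big_ord_recr /= subnn addrA; congr (_ + _).
rewrite -big_split; apply: eq_bigr => -[j /= jn] _.
by rewrite subSn // [in RHS]big_ord_recr.
Qed.

Section Poisson.
Variable R : realType.
Implicit Types (a b c : R) (f g : nat -> R).

Lemma ppmf_ge0 a k : 0 <= a -> 0 <= ppmf a k.
Proof. by move=> a0; rewrite /ppmf !mulr_ge0 ?invr_ge0 ?exprn_ge0 ?expR_ge0. Qed.

Lemma ppmfD a b n :
  ppmf (a + b) n = \sum_(k < n.+1) ppmf a (n - k) * ppmf b k.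
Proof.
rewrite /ppmf exprDn !mulr_suml; apply: eq_bigr => -[k /= kn] _.
have /bin_fact binE : (k <= n)%N by [].
have fact_neq0 m : m`!%:R != 0 :> R by rewrite pnatr_eq0 -lt0n fact_gt0.
have bin_neq0 : 'C(n, k)%:R != 0 :> R by rewrite pnatr_eq0 -lt0n bin_gt0.
rewrite -binE !natrM opprD expRD mulr_natr.
by field; rewrite !fact_neq0 bin_neq0.
Qed.

Lemma pcdfn_ge0 a n : 0 <= a -> 0 <= pcdfn a n.
Proof. by move=> a0; apply: sumr_ge0 => k _; exact: ppmf_ge0. Qed.

Lemma pcdfn0 n : pcdfn (0 : R) n = 1.
Proof.
rewrite /pcdfn big_ord_recl big1 => [|k _]; last by rewrite /ppmf expr0n /= !mul0r.
by rewrite /ppmf oppr0 expR0 fact0 !mulr1 divr1 addr0.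
Qed.

Lemma nondecreasing_pcdfn a : 0 <= a -> nondecreasing_seq (pcdfn a).
Proof.
move=> a0; apply/nondecreasing_seqP => n.
by rewrite /pcdfn [leRHS]big_ord_recr /= lerDl ppmf_ge0.
Qed.

Lemma cvg_pcdfn a : pcdfn a n @[n --> \oo] --> (1 : R).
Proof.
have -> : pcdfn a = (fun n => series (exp_coeff a) n.+1 * expR (- a)).
  apply/funext => n; rewrite /series /= big_mkord /pcdfn mulr_suml.
  by apply: eq_bigr => k _; rewrite /ppmf /exp_coeff.
rewrite -(expRxMexpNx_1 a); apply: cvgM; last exact: cvg_cst.
by rewrite (cvg_shiftS (series (exp_coeff a))); exact: is_cvg_series_exp_coeff.
Qed.

Lemma pcdfn_le1 a n : 0 <= a -> pcdfn a n <= 1.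
Proof.
move=> a0; rewrite -(cvg_lim _ (cvg_pcdfn a)) //.
exact: nondecreasing_cvgn_le (nondecreasing_pcdfn a0) (cvgP _ (cvg_pcdfn a)) n.
Qed.

Lemma exists_pcdfn_gt a u : u < 1 -> exists n, u < pcdfn a n.
Proof.
move=> u_lt1; have [N _ uN] := cvgr_gt _ (cvg_pcdfn a) _ u_lt1.
by exists N; apply: uN => /=.
Qed.

Lemma leq_pquant b u j : 0 <= b -> u < 1 ->
  (pquant b u <= j)%N = (u <= pcdfn b j).
Proof.
move=> b0 u_lt1; rewrite /pquant; case: eqP => [->|_].
  by rewrite pcdfn0 ltW.
case: pselect => [ex_n|]; last first.
  by have [n /ltW un] := exists_pcdfn_gt b u_lt1; case; exists n.
case: ex_minnP => m um m_min; apply/idP/idP => [mj|]; last exact: m_min.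
exact: le_trans um (nondecreasing_pcdfn b0 mj).
Qed.

Lemma indic_pquant b u j : 0 <= b -> u < 1 ->
  \1_`]-oo, pcdfn b j] u = (pquant b u <= j)%N%:R :> R.
Proof. by move=> b0 u_lt1; rewrite indicE leq_pquant // mem_setE in_itv. Qed.

(* [pconv a f n] is E[f (n - Y); Y <= n] for Y ~ P(a); when f is the
   distribution function of Z independent of Y, it is P(Y + Z <= n). *)
Definition pconv a f n : R := \sum_(j < n.+1) ppmf a (n - j) * f j.

Lemma eq_pconv a f g n : (forall j, f j = g j) -> pconv a f n = pconv a g n.
Proof. by move=> fg; apply: eq_bigr => j _; rewrite fg. Qed.

Lemma ler_pconv a f g n : 0 <= a -> (forall j, f j <= g j) ->
  pconv a f n <= pconv a g n.
Proof. by move=> a0 fg; apply: ler_sum => j _; rewrite ler_wpM2l ?ppmf_ge0. Qed.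

Lemma pconv_indic_geq a k n :
  pconv a (fun j => (k <= j)%N%:R) n = if (k <= n)%N then pcdfn a (n - k) else 0.
Proof.
rewrite /pconv; case: leqP => [kn|nk]; last first.
  by rewrite big1 // => j _; rewrite leqNgt (leq_trans (ltn_ord j) nk) mulr0.
rewrite -(big_mkord xpredT (fun j => ppmf a (n - j) * (k <= j)%N%:R)).
rewrite (big_cat_nat (leq0n k)) ?leqW //= [X in X + _]big1_seq ?add0r => [|j /andP[_]].
  rewrite -{1}(add0n k) big_addn subSn // /pcdfn -(big_mkord xpredT).
  rewrite big_nat_rev /= add0n; apply: eq_big_nat => i /andP[_ i_lt].
  rewrite leq_addl mulr1; congr ppmf; lia.
by rewrite mem_index_iota => /andP[_ jk]; rewrite leqNgt jk mulr0.
Qed.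

Lemma pconv1 a n : pconv a (fun=> 1) n = pcdfn a n.
Proof. by move: (pconv_indic_geq a 0 n); rewrite subn0. Qed.

Lemma pconv_cst_le a c n : 0 <= a -> 0 <= c -> pconv a (fun=> c) n <= c.
Proof.
move=> a0 c0; have -> : pconv a (fun=> c) n = c * pcdfn a n.
  by rewrite -pconv1 /pconv mulr_sumr; apply: eq_bigr => j _; rewrite mulr1 mulrC.
by rewrite ler_piMr ?pcdfn_le1.
Qed.

Lemma pconvD a b f n : pconv (a + b) f n = pconv a (pconv b f) n.
Proof.
rewrite /pconv; under [RHS]eq_bigr do rewrite mulr_sumr.
transitivity (\sum_(j < n.+1) \sum_(k < (n - j).+1)
                ppmf a (n - j - k) * (ppmf b k * f j)).
  apply: eq_bigr => j _; rewrite ppmfD mulr_suml.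
  by apply: eq_bigr => k _; rewrite mulrA.
rewrite -(sum_triangle (fun j k => ppmf a (n - j - k) * (ppmf b k * f j))).
apply: eq_bigr => -[i /= _] _.
by apply: eq_bigr => -[j /= j_le_i] _; rewrite -subnDA subnKC.
Qed.

Lemma pconvC a b (F : nat -> nat -> R) n m :
  pconv a (fun j => pconv b (F j) m) n = pconv b (fun k => pconv a (F^~ k) n) m.
Proof.
rewrite /pconv; under eq_bigr do rewrite mulr_sumr.
rewrite exchange_big /=; apply: eq_bigr => k _; rewrite mulr_sumr.
by apply: eq_bigr => j _; rewrite mulrCA.
Qed.

Lemma pconv_pcdfn a b n : pconv a (pcdfn b) n = pcdfn (a + b) n.
Proof. by rewrite -pconv1 pconvD; apply: eq_pconv => j; rewrite pconv1. Qed.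

Lemma pcdf_subn_lt0 a x k : x < 0 -> pcdf a (x - k%:R) = 0.
Proof. by move=> x_lt0; rewrite /pcdf ifT // subr_lt0 (lt_le_trans x_lt0). Qed.

Lemma pcdf_subn a x k : 0 <= x ->
  pcdf a (x - k%:R) = if (k <= Num.truncn x)%N then pcdfn a (Num.truncn x - k) else 0.
Proof.
move=> x0; have /andP[nx xn] := truncn_itv x0; rewrite /pcdf.
case: leqP => [kn|nk]; last by rewrite ifT // subr_lt0 (lt_le_trans xn) ?ler_nat.
rewrite ifF; last by apply/negbTE; rewrite -leNgt subr_ge0 (le_trans _ nx) ?ler_nat.
congr pcdfn; apply: truncn_def; rewrite -addn1 natrD natrB //.
by move: nx xn; rewrite -natr1; lra.
Qed.

Lemma pcdf_sub_pquant a b x u : 0 <= b -> 0 <= x -> u < 1 ->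
  pcdf a (x - (pquant b u)%:R) =
  pconv a (fun j => \1_`]-oo, pcdfn b j] u) (Num.truncn x).
Proof.
move=> b0 x0 u_lt1; rewrite pcdf_subn // -pconv_indic_geq.
by apply: eq_pconv => j; rewrite indic_pquant.
Qed.

(* Distribution function, at integer points, of (Y1 + Z1, Y2 + Z2) with
   Yj ~ P(aj) independent and (Z1, Z2) the comonotone pair of P(bj)
   variables, whose joint distribution function is the Frechet upper bound
   min (G_b1, G_b2). *)
Definition bpcdfn a1 a2 b1 b2 n1 n2 : R :=
  pconv a1 (fun j1 => pconv a2 (fun j2 => Num.min (pcdfn b1 j1) (pcdfn b2 j2)) n2) n1.

Lemma bpcdfn_le_min a1 a2 b1 b2 n1 n2 :
  0 <= a1 -> 0 <= a2 -> 0 <= b1 -> 0 <= b2 ->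
  bpcdfn a1 a2 b1 b2 n1 n2 <= Num.min (pcdfn (a1 + b1) n1) (pcdfn (a2 + b2) n2).
Proof.
move=> a1_ge0 a2_ge0 b1_ge0 b2_ge0; rewrite le_min; apply/andP; split.
- rewrite -pconv_pcdfn; apply: ler_pconv => // j1.
  apply: (@le_trans _ _ (pconv a2 (fun=> pcdfn b1 j1) n2)).
    by apply: ler_pconv => // j2; rewrite ge_min lexx.
  by rewrite pconv_cst_le ?pcdfn_ge0.
- apply: (@le_trans _ _ (pconv a1 (fun=> pcdfn (a2 + b2) n2) n1)).
    apply: ler_pconv => // j1; rewrite -pconv_pcdfn; apply: ler_pconv => // j2.
    by rewrite ge_min lexx orbT.
  by rewrite pconv_cst_le ?pcdfn_ge0 ?addr_ge0.
Qed.

Lemma le_bpcdfn_shock a1 a2 b1 b2 c1 c2 n1 n2 :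
  0 <= a1 -> 0 <= a2 -> 0 <= b1 -> 0 <= b2 -> 0 <= c1 -> 0 <= c2 ->
  bpcdfn (a1 + c1) (a2 + c2) b1 b2 n1 n2 <= bpcdfn a1 a2 (c1 + b1) (c2 + b2) n1 n2.
Proof.
move=> a1_ge0 a2_ge0 b1_ge0 b2_ge0 c1_ge0 c2_ge0.
rewrite /bpcdfn pconvD; apply: ler_pconv => // i1.
under eq_pconv => j1 do rewrite pconvD.
by rewrite pconvC; apply: ler_pconv => // i2; exact: bpcdfn_le_min.
Qed.

End Poisson.

Section Integration.
Variable R : realType.
Local Notation mu := (@lebesgue_measure R).

Lemma integral_itv01_indic (m : R) : 0 <= m <= 1 ->
  (\int[mu]_(u in `]0%R, 1%R[) (\1_`]-oo, m] u)%:E = m%:E)%E.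
Proof.
move=> /andP[m_ge0 m_le1]; rewrite integral_indic //.
have [m_lt1|m_ge1] := ltP m 1.
  rewrite (_ : _ `&` _ = `]0%R, m]%classic); last first.
    apply/seteqP; split => u /=; rewrite !in_itv /=.
      by case=> um /andP[u0 _]; rewrite u0 um.
    by move=> /andP[u0 um]; rewrite um u0 (le_lt_trans um m_lt1).
  have := lebesgue_measure_itv `]0%R, m]; rewrite /= => ->.
  rewrite lte_fin oppr0 adde0; case: ltP => // m_le0.
  by have -> : m = 0 by apply/le_anti; rewrite m_le0 m_ge0.
have m1 : m = 1 by apply/le_anti; rewrite m_le1 m_ge1.
rewrite (_ : _ `&` _ = `]0%R, 1%R[%classic).
  have := lebesgue_measure_itv `]0%R, 1%R[; rewrite /= => ->.
  by rewrite lte_fin ltr01 oppr0 adde0 m1.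
apply/seteqP; split => u /=; rewrite !in_itv /=; first by case.
by move=> u01; split; rewrite // m1 ltW //; case/andP: u01.
Qed.

Lemma integral_itv01_sum_indic (I : Type) (r : seq I) (c m : I -> R) :
  (forall i, 0 <= c i) -> (forall i, 0 <= m i <= 1) ->
  (\int[mu]_(u in `]0%R, 1%R[) (\sum_(i <- r) c i * \1_`]-oo, m i] u)%:E =
   (\sum_(i <- r) c i * m i)%:E)%E.
Proof.
move=> c_ge0 m01; under eq_integral do rewrite -sumEFin.
rewrite ge0_integral_sum //; first last.
- by move=> i u _; rewrite lee_fin mulr_ge0.
- by move=> i; apply/measurable_EFinP/measurable_funM.
rewrite -sumEFin; apply: eq_bigr => i _; under eq_integral do rewrite EFinM.
by rewrite ge0_integralZl_EFin ?integral_itv01_indic //; apply/measurable_EFinP.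
Qed.

Lemma integral_pcdf_sub_pquant (a b x : R) : 0 <= a -> 0 <= b ->
  (\int[mu]_(u in `]0%R, 1%R[) (pcdf a (x - (pquant b u)%:R))%:E =
   (pcdf (a + b) x)%:E)%E.
Proof.
move=> a0 b0; have [x_lt0|x_ge0] := ltP x 0.
  rewrite integral0_eq => [|u _]; last by rewrite pcdf_subn_lt0.
  by rewrite /pcdf x_lt0.
set n := Num.truncn x; rewrite [in RHS]/pcdf ltNge x_ge0 /= -pconv_pcdfn.
rewrite -(@integral_itv01_sum_indic _ _ (fun j : 'I_n.+1 => ppmf a (n - j))
                                       (fun j : 'I_n.+1 => pcdfn b j)).
- apply: eq_integral => u; rewrite inE /= in_itv /= => /andP[_ u_lt1].
  by rewrite pcdf_sub_pquant.
- by move=> j; rewrite ppmf_ge0.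
- by move=> j; rewrite pcdfn_ge0 ?pcdfn_le1.
Qed.

Lemma integral_pcdf_sub_pquant2 (a1 a2 b1 b2 x1 x2 : R) :
  0 <= a1 -> 0 <= a2 -> 0 <= b1 -> 0 <= b2 ->
  (\int[mu]_(u in `]0%R, 1%R[)
     (pcdf a1 (x1 - (pquant b1 u)%:R) * pcdf a2 (x2 - (pquant b2 u)%:R))%:E =
   (if (0 <= x1) && (0 <= x2)
    then bpcdfn a1 a2 b1 b2 (Num.truncn x1) (Num.truncn x2) else 0)%:E)%E.
Proof.
move=> a1_ge0 a2_ge0 b1_ge0 b2_ge0.
have [x1_lt0|x1_ge0] := ltP x1 0.
  by rewrite integral0_eq // => u _; rewrite pcdf_subn_lt0 ?mul0r.
have [x2_lt0|x2_ge0] := ltP x2 0.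
  by rewrite integral0_eq // => u _; rewrite (pcdf_subn_lt0 _ _ x2_lt0) mulr0.
set n1 := Num.truncn x1; set n2 := Num.truncn x2.
pose c (p : 'I_n1.+1 * 'I_n2.+1) := ppmf a1 (n1 - p.1) * ppmf a2 (n2 - p.2).
pose m (p : 'I_n1.+1 * 'I_n2.+1) := Num.min (pcdfn b1 p.1) (pcdfn b2 p.2).
have -> : bpcdfn a1 a2 b1 b2 n1 n2 = \sum_p c p * m p.
  rewrite /bpcdfn /pconv; under eq_bigr do rewrite mulr_sumr.
  by rewrite pair_bigA; apply: eq_bigr => p _; rewrite mulrA.
rewrite -integral_itv01_sum_indic; first last.
- by move=> p; rewrite le_min ge_min !pcdfn_ge0 ?pcdfn_le1.
- by move=> p; rewrite mulr_ge0 ?ppmf_ge0.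
apply: eq_integral => u; rewrite inE /= in_itv /= => /andP[_ u_lt1].
rewrite !pcdf_sub_pquant // /pconv big_distrlr pair_bigA /=; congr EFin.
apply: eq_bigr => p _.
by rewrite mulrACA !indicE !mem_setE !in_itv /= le_min -natrM mulnb.
Qed.
End Integration.

Unset Implicit Arguments.
Local Close Scope classical_set_scope.

Theorem corollary1 (R : realType) (l1 l2 ph th th' : R) :
  0 < l1 -> 0 < l2 -> 0 <= ph -> ph < 1 ->
  0 <= th -> th < th' -> th' <= 1 ->
  (* identical marginals *)
  (forall x : R, Hplus1 l1 th ph x = Hplus1 l1 th' ph x) /\
  (forall x : R, Hplus1 l2 th ph x = Hplus1 l2 th' ph x) /\
  (* PQD ordering of the joint distribution functions *)
  (forall x1 x2 : R, (Hplus l1 l2 th ph x1 x2 <= Hplus l1 l2 th' ph x1 x2)%E).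
Proof.
move=> /ltW l1_ge0 /ltW l2_ge0 _ /ltW ph_le1 th_ge0 /ltW th_le_th' th'_le1.
have th_le1 := le_trans th_le_th' th'_le1.
have th'_ge0 := le_trans th_ge0 th_le_th'.
have marginal l : 0 <= l -> forall x, Hplus1 l th ph x = Hplus1 l th' ph x.
  move=> l_ge0 x; rewrite /Hplus1 !integral_pcdf_sub_pquant ?mulr_ge0 ?subr_ge0 //.
  by rewrite -!mulrDl !subrK.
split; first exact: marginal.
split; first exact: marginal.
move=> x1 x2; rewrite /Hplus leeD2l //.
apply: lee_wpmul2l; first by rewrite lee_fin subr_ge0.
rewrite !integral_pcdf_sub_pquant2 ?mulr_ge0 ?subr_ge0 //; case: ifP => // _.
have shift_indep l : (1 - th) * l = (1 - th') * l + (th' - th) * l by ring.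
have shift_shock l : th' * l = (th' - th) * l + th * l by ring.
rewrite lee_fin !shift_indep !shift_shock.
by apply: le_bpcdfn_shock; rewrite ?mulr_ge0 ?subr_ge0.
Qed.
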